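(* Let $H$ be a complex Hilbert space and let $Q \in \mathcal{L}(H)$ be an orthogonal projection. Then $Q$ satisfies the property $\mathcal{AN}^*$ if and only if the null space $\mathrm{Ker}\,Q$ is finite dimensional or the range $Q(H)$ is finite dimensional.
   Context: $\mathcal{L}(H)$ is the space of bounded linear operators on $H$. For a closed subspace $M \neq \{0\}$ of $H$ and $T \in \mathcal{L}(H)$, write $[T|_M] := \inf\{\|Tx\| : x \in M, \|x\|=1\}$; $T|_M$ satisfies $\mathcal{N}^*$ if there is $x_0 \in M$ with $\|x_0\|=1$ and $\|Tx_0\| = [T|_M]$. $T$ satisfies the property $\mathcal{AN}^*$ if $T|_M$ satisfies $\mathcal{N}^*$ for every closed subspace $M \neq \{0\}$ of $H$. *)

From mathcomp Require Import all_boot all_order all_algebra.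
From mathcomp Require Import complex.
From mathcomp Require Import boolp classical_sets reals.

Set Implicit Arguments.
Unset Strict Implicit.
Unset Printing Implicit Defensive.

Import Order.TTheory GRing.Theory Num.Theory.
Local Open Scope ring_scope.
Local Open Scope classical_set_scope.

Section Hilbert.
Variables (R : realType) (H : lmodType R[i]) (ip : H -> H -> R[i]).

Definition hnorm (x : H) : R := Num.sqrt (complex.Re (ip x x)).

Definition is_inner_product : Prop :=
  [/\ (forall (a : R[i]) (x y z : H), ip (a *: x + y) z = a * ip x z + ip y z),
      (forall x y : H, ip y x = conjc (ip x y)),
      (forall x : H, 0 <= ip x x) &
      (forall x : H, ip x x = 0 -> x = 0)].

Definition hcauchy (u : nat -> H) : Prop :=
  forall e : R, 0 < e -> exists N : nat,
    forall m n : nat, (N <= m)%N -> (N <= n)%N -> hnorm (u m - u n) < e.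

Definition hconverges (u : nat -> H) (l : H) : Prop :=
  forall e : R, 0 < e -> exists N : nat,
    forall n : nat, (N <= n)%N -> hnorm (u n - l) < e.

Definition hcomplete : Prop :=
  forall u : nat -> H, hcauchy u -> exists l : H, hconverges u l.

Definition is_hilbert : Prop := is_inner_product /\ hcomplete.

Definition bounded_linear (T : H -> H) : Prop :=
  (forall (a : R[i]) (x y : H), T (a *: x + y) = a *: T x + T y) /\
  (exists c : R, forall x : H, hnorm (T x) <= c * hnorm x).

Definition orth_projection (Q : H -> H) : Prop :=
  [/\ bounded_linear Q,
      (forall x : H, Q (Q x) = Q x) &
      (forall x y : H, ip (Q x) y = ip x (Q y))].

Definition closed_subspace (M : set H) : Prop :=
  [/\ M 0,
      (forall (a : R[i]) (x y : H), M x -> M y -> M (a *: x + y)) &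
      (forall (u : nat -> H) (l : H), (forall n, M (u n)) -> hconverges u l -> M l)].

Definition lower_bound_on (T : H -> H) (M : set H) : R :=
  inf [set hnorm (T x) | x in [set x | M x /\ hnorm x = 1]].

Definition satisfies_Nstar (T : H -> H) (M : set H) : Prop :=
  exists x0 : H, [/\ M x0, hnorm x0 = 1 & hnorm (T x0) = lower_bound_on T M].

Definition satisfies_ANstar (T : H -> H) : Prop :=
  forall M : set H, closed_subspace M -> M <> [set 0] -> satisfies_Nstar T M.

Definition kernel (T : H -> H) : set H := [set x | T x = 0].
(* the range Q(H) is classical_sets' [range Q] = Q @` setT *)

Definition finite_dim (S : set H) : Prop :=
  exists s : seq H, (forall v, v \in s -> S v) /\
    forall x, S x -> exists c : 'I_(size s) -> R[i],
      x = \sum_(i < size s) c i *: s`_i.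

End Hilbert.

(* Let [M] be a nonzero closed subspace. If [Q(H)] is finite dimensional,
   either some unit vector of [M] lies in [Ker Q], or [Q] is injective on [M];
   then [M] is finite dimensional and [x |-> |Q x|] attains its infimum on the
   compact unit sphere of [M]. If [Ker Q = (I - Q)(H)] is finite dimensional,
   split [M] orthogonally as [N (+) M1] with [N = M /\ Q(H)]: [I - Q] is
   injective on [M1], which is thus finite dimensional, and since
   [|Q x|^2 = 1 - |(I - Q) x|^2] on unit vectors, a minimizer on the unit
   sphere of [M1] is a minimizer on that of [M].
   Conversely, if both are infinite dimensional, pick orthonormal sequences
   [e_n] in [Ker Q] and [f_n] in [Q(H)]; the closed subspace
   [M = {x | (I - Q) x _|_ {e_n}^_|_, <x, f_n> = <x, e_n> / (n + 1)}] contains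
   [e_n + f_n / (n + 1)], so [[Q|_M] = 0], yet no unit vector of [M] lies in
   [Ker Q]. *)

From mathcomp Require Import all_boot all_order all_algebra.
From mathcomp Require Import complex.
From mathcomp Require Import unstable boolp classical_sets reals.
From mathcomp Require Import topology normedtype sequences.
From mathcomp Require Import ring lra.

Set Implicit Arguments.
Unset Strict Implicit.
Unset Printing Implicit Defensive.

Import Order.TTheory GRing.Theory Num.Theory.
Import numFieldNormedType.Exports.
Import Normc.
Local Open Scope ring_scope.
Local Open Scope complex_scope.
Local Open Scope classical_set_scope.

Local Notation Re := complex.Re.
Local Notation Im := complex.Im.

Lemma exists_inv_succ_lt (R : realType) (e : R) : 0 < e -> exists k : nat, k.+1%:R^-1 < e.
Proof. by move=> e0; have [k] := ltr_add_invr e0; rewrite add0r; exists k. Qed.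

Lemma inv_succ_le (R : numFieldType) (k m : nat) : (k <= m)%N -> (m.+1%:R : R)^-1 <= k.+1%:R^-1.
Proof. by move=> km; rewrite lef_pV2 ?posrE ?ltr0n // ler_nat. Qed.

Lemma increasing_seq_ge (f : nat -> nat) : increasing_seq f -> forall n, (n <= f n)%N.
Proof. exact: mono_leq_infl. Qed.

Lemma increasing_seq_comp (f g : nat -> nat) :
  increasing_seq f -> increasing_seq g -> increasing_seq (f \o g).
Proof. by move=> hf hg m n /=; rewrite -[RHS]hg; exact: hf. Qed.

Lemma normc_ge0 (R : rcfType) (a : R[i]) : 0 <= normc a.
Proof. by case: a => ? ?; exact: sqrtr_ge0. Qed.

Lemma sqr_normc (R : rcfType) (a : R[i]) : normc a ^+ 2 = Re a ^+ 2 + Im a ^+ 2.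
Proof. by case: a => ? ? /=; rewrite sqr_sqrtr // addr_ge0 ?sqr_ge0. Qed.

Lemma normc_real (R : rcfType) (r : R) : normc r%:C = `|r|.
Proof. by rewrite /= expr0n /= addr0 sqrtr_sqr. Qed.

Lemma normc_le_ReIm (R : rcfType) (a : R[i]) : normc a <= `|Re a| + `|Im a|.
Proof.
rewrite -(@ler_pXn2r _ 2) ?nnegrE ?normc_ge0 ?addr_ge0 // sqr_normc.
rewrite -[Re a ^+ 2]real_normK ?num_real // -[Im a ^+ 2]real_normK ?num_real //.
have := normr_ge0 (Re a); have := normr_ge0 (Im a); nra.
Qed.

Lemma normc_ge_Re (R : rcfType) (a : R[i]) : `|Re a| <= normc a.
Proof.
rewrite -(@ler_pXn2r _ 2) ?nnegrE ?normc_ge0 // sqr_normc real_normK ?num_real //.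
by rewrite lerDl sqr_ge0.
Qed.

Lemma normc_ge_Im (R : rcfType) (a : R[i]) : `|Im a| <= normc a.
Proof.
rewrite -(@ler_pXn2r _ 2) ?nnegrE ?normc_ge0 // sqr_normc real_normK ?num_real //.
by rewrite lerDr sqr_ge0.
Qed.

Lemma real_bolzano_weierstrass (R : realType) (u : nat -> R) (B : R) :
  (forall n, `|u n| <= B) -> exists2 f, increasing_seq f & exists L,
    forall e, 0 < e -> exists N, forall n, (N <= n)%N -> `|u (f n) - L| < e.
Proof.
move=> uB; have [|f hf cvf] := @bolzano_weierstrass _ u.
  by exists B; split; [exact: num_real | move=> M BM x _; exact: le_trans (uB x) (ltW BM)].
exists f => //; exists (lim ((u \o f) @ \oo)) => e e0.
by have [N _ hN] := (proj1 (cvgrPdistC_lt _ _) cvf) e e0; exists N.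
Qed.

Definition cconverges (R : realType) (a : nat -> R[i]) (L : R[i]) : Prop :=
  forall e, 0 < e -> exists N, forall n, (N <= n)%N -> normc (a n - L) < e.

Lemma cconverges_subseq (R : realType) (a : nat -> R[i]) L f :
  increasing_seq f -> cconverges a L -> cconverges (a \o f) L.
Proof.
move=> f_incr aL e /aL [N hN]; exists N => n Nn.
by apply: hN; exact: leq_trans Nn (increasing_seq_ge f_incr n).
Qed.

Lemma complex_bolzano_weierstrass (R : realType) (a : nat -> R[i]) (B : R) :
  (forall n, normc (a n) <= B) -> exists2 f, increasing_seq f & exists L, cconverges (a \o f) L.
Proof.
move=> aB.
have [f1 hf1 [ar har]] := @real_bolzano_weierstrass _ (fun n => Re (a n)) B
  (fun n => le_trans (normc_ge_Re _) (aB n)).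
have [f2 hf2 [ai hai]] := @real_bolzano_weierstrass _ (fun n => Im (a (f1 n))) B
  (fun n => le_trans (normc_ge_Im _) (aB _)).
exists (f1 \o f2); first exact: increasing_seq_comp.
exists (ar +i* ai) => e e0.
have e2 : 0 < e / 2 by rewrite divr_gt0.
have [N1 hN1] := har _ e2; have [N2 hN2] := hai _ e2.
exists (maxn N1 N2) => n; rewrite geq_max => /andP[n1 n2] /=.
have := hN1 _ (leq_trans n1 (increasing_seq_ge hf2 n)).
have := hN2 _ n2; have := normc_le_ReIm (a (f1 (f2 n)) - (ar +i* ai)).
case: (a (f1 (f2 n))) => p q /= h h2 h1.
by rewrite [e]splitr; apply: le_lt_trans h (ltrD h1 h2).
Qed.

Section InnerProductSpace.
Variables (R : realType) (H : lmodType R[i]) (ip : H -> H -> R[i]).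
Hypothesis ip_linear : forall (a : R[i]) (x y z : H), ip (a *: x + y) z = a * ip x z + ip y z.
Hypothesis ip_conj : forall x y : H, ip y x = conjc (ip x y).
Hypothesis ip_ge0 : forall x : H, 0 <= ip x x.
Hypothesis ip_eq0 : forall x : H, ip x x = 0 -> x = 0.

Local Notation hn := (hnorm ip).

Lemma ip0l z : ip 0 z = 0.
Proof. by have := ip_linear (-1) 0 0 z; rewrite scaler0 addr0 mulN1r addNr. Qed.

Lemma ipDl x y z : ip (x + y) z = ip x z + ip y z.
Proof. by have := ip_linear 1 x y z; rewrite scale1r mul1r. Qed.

Lemma ipZl a x z : ip (a *: x) z = a * ip x z.
Proof. by rewrite -[a *: x]addr0 ip_linear ip0l addr0. Qed.

Lemma ipNl x z : ip (- x) z = - ip x z.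
Proof. by rewrite -scaleN1r ipZl mulN1r. Qed.

Lemma ipBl x y z : ip (x - y) z = ip x z - ip y z.
Proof. by rewrite ipDl ipNl. Qed.

Lemma ip0r z : ip z 0 = 0.
Proof. by rewrite ip_conj ip0l conjc0. Qed.

Lemma ipDr x y z : ip z (x + y) = ip z x + ip z y.
Proof. by rewrite ip_conj ipDl rmorphD /= -!ip_conj. Qed.

Lemma ipZr a x z : ip z (a *: x) = conjc a * ip z x.
Proof. by rewrite ip_conj ipZl rmorphM /= -ip_conj. Qed.

Lemma ipNr x z : ip z (- x) = - ip z x.
Proof. by rewrite ip_conj ipNl rmorphN /= -ip_conj. Qed.

Lemma ipBr x y z : ip z (x - y) = ip z x - ip z y.
Proof. by rewrite ipDr ipNr. Qed.

Lemma ip_suml (I : Type) (r : seq I) (F : I -> H) z :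
  ip (\sum_(i <- r) F i) z = \sum_(i <- r) ip (F i) z.
Proof. by elim: r => [|a r IH]; rewrite ?big_nil ?ip0l // !big_cons ipDl IH. Qed.

Definition sqnorm x := Re (ip x x).

Lemma ip_sqnorm x : ip x x = (sqnorm x)%:C.
Proof.
by have := ip_ge0 x; rewrite /sqnorm; case: (ip x x) => a b; rewrite lecE /= => /andP[/eqP -> _].
Qed.

Lemma sqnorm0 : sqnorm 0 = 0.
Proof. by rewrite /sqnorm ip0l. Qed.

Lemma sqnorm_ge0 x : 0 <= sqnorm x.
Proof. by have := ip_ge0 x; rewrite ip_sqnorm lecR. Qed.

Lemma sqnorm_eq0 x : sqnorm x = 0 -> x = 0.
Proof. by move=> h; apply: ip_eq0; rewrite ip_sqnorm h. Qed.

Lemma sqnormD x y : sqnorm (x + y) = sqnorm x + 2 * Re (ip x y) + sqnorm y.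
Proof.
rewrite {1}/sqnorm !ipDl !ipDr ip_sqnorm (ip_sqnorm y) (ip_conj x y).
by case: (ip x y) => a b /=; ring.
Qed.

Lemma sqnormZ a x : sqnorm (a *: x) = normc a ^+ 2 * sqnorm x.
Proof. by rewrite /sqnorm ipZl ipZr ip_sqnorm sqr_normc; case: a => ? ? /=; ring. Qed.

Lemma sqnormN x : sqnorm (- x) = sqnorm x.
Proof. by rewrite -scaleN1r sqnormZ normcN normc1 expr1n mul1r. Qed.

Lemma sqnorm_subZ x y c :
  sqnorm (x - c *: y) = sqnorm x - 2 * Re (c^* * ip x y) + normc c ^+ 2 * sqnorm y.
Proof.
rewrite sqnormD sqnormN sqnormZ ipNr ipZr.
have -> : Re (- (c^* * ip x y)) = - Re (c^* * ip x y) by case: (_ * _).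
ring.
Qed.

Lemma parallelogram x y : sqnorm (x - y) + sqnorm (x + y) = 2 * sqnorm x + 2 * sqnorm y.
Proof.
rewrite !sqnormD sqnormN ipNr.
have -> : Re (- ip x y) = - Re (ip x y) by case: (ip x y).
ring.
Qed.

Lemma cauchy_schwarz_sqr x y : normc (ip x y) ^+ 2 <= sqnorm x * sqnorm y.
Proof.
have [y0|yn0] := eqVneq (sqnorm y) 0.
  by rewrite y0 (sqnorm_eq0 y0) ip0r mulr0 normc0 expr0n.
have y_gt0 : 0 < sqnorm y by rewrite lt_def yn0 sqnorm_ge0.
(* expand [0 <= |x - t y|^2] at the minimizing [t = <x, y> / |y|^2] *)
have := sqnorm_ge0 (x - (ip x y * (sqnorm y)^-1%:C) *: y).
rewrite sqnorm_subZ !sqr_normc.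
have yk : sqnorm y * (sqnorm y)^-1 = 1 by rewrite mulfV.
move: yk y_gt0; set n := sqnorm y; set k := n^-1.
case: (ip x y) => a b /= yk n_gt0 h.
have := mulr_ge0 (ltW n_gt0) h; nra.
Qed.

Lemma hnorm_ge0 x : 0 <= hn x.
Proof. exact: sqrtr_ge0. Qed.

Lemma sqr_hnorm x : hn x ^+ 2 = sqnorm x.
Proof. by rewrite sqr_sqrtr // sqnorm_ge0. Qed.

Lemma hnorm0 : hn 0 = 0.
Proof. by rewrite /hnorm ip0l sqrtr0. Qed.

Lemma hnorm_eq0 x : hn x = 0 -> x = 0.
Proof. by move=> h; apply: sqnorm_eq0; rewrite -sqr_hnorm h expr0n. Qed.

Lemma hnorm_gt0 x : x != 0 -> 0 < hn x.
Proof. by move=> x0; rewrite lt_def hnorm_ge0 andbT; apply: contra x0 => /eqP/hnorm_eq0 ->. Qed.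

Lemma ler_hnorm x y : (hn x <= hn y) = (sqnorm x <= sqnorm y).
Proof. by rewrite /hnorm ler_sqrt // sqnorm_ge0. Qed.

Lemma hnormZ a x : hn (a *: x) = normc a * hn x.
Proof.
by rewrite /hnorm -/(sqnorm _) sqnormZ sqrtrM ?sqr_ge0 // sqrtr_sqr ger0_norm ?normc_ge0.
Qed.

Lemma hnormN x : hn (- x) = hn x.
Proof. by rewrite /hnorm -!/(sqnorm _) sqnormN. Qed.

Lemma hnormB x y : hn (x - y) = hn (y - x).
Proof. by rewrite -hnormN opprB. Qed.

Lemma cauchy_schwarz x y : normc (ip x y) <= hn x * hn y.
Proof.
rewrite -(@ler_pXn2r _ 2) ?nnegrE ?normc_ge0 ?mulr_ge0 ?hnorm_ge0 //.
by rewrite exprMn !sqr_hnorm cauchy_schwarz_sqr.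
Qed.

Lemma hnormD x y : hn (x + y) <= hn x + hn y.
Proof.
rewrite -(@ler_pXn2r _ 2) ?nnegrE ?addr_ge0 ?hnorm_ge0 // sqr_hnorm sqnormD.
rewrite sqrrD !sqr_hnorm lerD2r lerD2l.
have := le_trans (ler_norm _) (le_trans (normc_ge_Re (ip x y)) (cauchy_schwarz x y)).
lra.
Qed.

Lemma ler_dist_hnorm x y : `|hn x - hn y| <= hn (x - y).
Proof.
have le_sub u v : hn u - hn v <= hn (u - v) by have := hnormD (u - v) v; rewrite subrK; lra.
by rewrite ler_norml le_sub andbT lerNl opprB hnormB le_sub.
Qed.

Lemma hnorm_normalize x : x != 0 -> hn ((hn x)^-1%:C *: x) = 1.
Proof.
move=> x0; rewrite hnormZ normc_real ger0_norm ?invr_ge0 ?hnorm_ge0 //.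
by rewrite mulVf // gt_eqF // hnorm_gt0.
Qed.

Lemma hnorm_ip1 u : ip u u = 1 -> hn u = 1.
Proof. by move=> h; rewrite /hnorm h sqrtr1. Qed.

Lemma hconverges_unique u l1 l2 : hconverges ip u l1 -> hconverges ip u l2 -> l1 = l2.
Proof.
move=> h1 h2; apply/eqP; rewrite -subr_eq0; apply/eqP/hnorm_eq0/le_anti.
rewrite hnorm_ge0 andbT; apply/ler_addgt0Pr => e e0.
have e2 : 0 < e / 2 by rewrite divr_gt0.
have [N1 hN1] := h1 _ e2; have [N2 hN2] := h2 _ e2.
have a1 := hN1 _ (leq_maxl N1 N2); have a2 := hN2 _ (leq_maxr N1 N2).
rewrite hnormB in a1.
have := hnormD (l1 - u (maxn N1 N2)) (u (maxn N1 N2) - l2); rewrite addrA subrK; lra.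
Qed.

Lemma hconverges_cst l : hconverges ip (fun _ => l) l.
Proof. by move=> e e0; exists 0%N => n _; rewrite subrr hnorm0. Qed.

Lemma hconvergesD u v l m : hconverges ip u l -> hconverges ip v m ->
  hconverges ip (fun n => u n + v n) (l + m).
Proof.
move=> h1 h2 e e0.
have e2 : 0 < e / 2 by rewrite divr_gt0.
have [N1 hN1] := h1 _ e2; have [N2 hN2] := h2 _ e2.
exists (maxn N1 N2) => n; rewrite geq_max => /andP[n1 n2].
have := hnormD (u n - l) (v n - m); rewrite addrACA -opprD.
have := hN1 n n1; have := hN2 n n2; lra.
Qed.

Lemma hconvergesN u l : hconverges ip u l -> hconverges ip (fun n => - u n) (- l).
Proof. by move=> h e /h [N hN]; exists N => n /hN; rewrite -opprD hnormN. Qed.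

Lemma hconvergesB u v l m : hconverges ip u l -> hconverges ip v m ->
  hconverges ip (fun n => u n - v n) (l - m).
Proof. by move=> h1 h2; apply: hconvergesD h1 (hconvergesN h2). Qed.

Lemma hconvergesZl (a : nat -> R[i]) (L : R[i]) v :
  cconverges a L -> hconverges ip (fun n => a n *: v) (L *: v).
Proof.
move=> aL e e0.
have v1 : 0 < hn v + 1 by have := hnorm_ge0 v; lra.
have [N hN] := aL _ (divr_gt0 e0 v1).
exists N => n /hN; rewrite -scalerBl hnormZ ltr_pdivlMr // => h.
by apply: le_lt_trans h; rewrite ler_wpM2l ?normc_ge0 ?lerDl.
Qed.

Definition is_linear (T : H -> H) := forall a x y, T (a *: x + y) = a *: T x + T y.

Section LinearMap.
Variable T : H -> H.
Hypothesis T_lin : is_linear T.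

Lemma lin0 : T 0 = 0.
Proof. by have := T_lin (-1) 0 0; rewrite scaler0 addr0 scaleN1r addNr. Qed.

Lemma linD x y : T (x + y) = T x + T y.
Proof. by have := T_lin 1 x y; rewrite !scale1r. Qed.

Lemma linZ a x : T (a *: x) = a *: T x.
Proof. by have := T_lin a x 0; rewrite !addr0 lin0 addr0. Qed.

Lemma linN x : T (- x) = - T x.
Proof. by rewrite -scaleN1r linZ scaleN1r. Qed.

Lemma linB x y : T (x - y) = T x - T y.
Proof. by rewrite linD linN. Qed.

End LinearMap.

Lemma hconverges_bounded_linear T u l : bounded_linear ip T -> hconverges ip u l ->
  hconverges ip (fun n => T (u n)) (T l).
Proof.
move=> [T_lin [c hc]] ul e e0.
have c1 : 0 < `|c| + 1 by have := normr_ge0 c; lra.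
have [N hN] := ul _ (divr_gt0 e0 c1).
exists N => n /hN; rewrite -(linB T_lin) ltr_pdivlMr // => h.
apply: le_lt_trans (hc _) _; apply: le_lt_trans h; rewrite mulrC.
by apply: ler_wpM2l; [exact: hnorm_ge0 | have := ler_norm c; lra].
Qed.

Lemma ip_lim_eq0 u l z : hconverges ip u l -> (forall n, ip (u n) z = 0) -> ip l z = 0.
Proof.
move=> ul uz; apply: eq0_normc; apply/le_anti; rewrite normc_ge0 andbT.
apply/ler_addgt0Pr => e e0; rewrite add0r.
have z1 : 0 < hn z + 1 by have := hnorm_ge0 z; lra.
have [N hN] := ul _ (divr_gt0 e0 z1).
have := hN N (leqnn N); rewrite ltr_pdivlMr // => h.
rewrite -normcN -[- _]add0r -(uz N) -ipBl.
apply/ltW/(le_lt_trans (cauchy_schwarz _ _))/(le_lt_trans _ h).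
by apply: ler_wpM2l; [exact: hnorm_ge0 | lra].
Qed.

Lemma hnorm_lim_le u l (b : R) : hconverges ip u l ->
  (forall n, hn (u n) <= b + n.+1%:R^-1) -> hn l <= b.
Proof.
move=> ul ub; apply/ler_addgt0Pr => e e0.
have e2 : 0 < e / 2 by rewrite divr_gt0.
have [k hk] := exists_inv_succ_lt e2; have [N hN] := ul _ e2.
have := hN _ (leq_maxl N k); have := ub (maxn N k).
have := inv_succ_le R (leq_maxr N k).
have := ler_dist_hnorm (u (maxn N k)) l; rewrite ler_norml => /andP[+ _].
move: hk; set q := k.+1%:R^-1; set r := (maxn N k).+1%:R^-1.
lra.
Qed.

Lemma hnorm_lim_ge u l (b : R) : hconverges ip u l -> (forall n, b <= hn (u n)) -> b <= hn l.
Proof.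
move=> ul ub; apply/ler_addgt0Pr => e e0.
have [N hN] := ul _ e0; have := hN N (leqnn N); have := ub N.
have := ler_dist_hnorm (u N) l; rewrite ler_norml => /andP[_ +].
lra.
Qed.

Definition subspace (S : set H) := S 0 /\ forall a x y, S x -> S y -> S (a *: x + y).

Section Subspace.
Variable S : set H.
Hypothesis S_sub : subspace S.

Lemma subspaceZ a x : S x -> S (a *: x).
Proof. by case: S_sub => S0 Slin Sx; rewrite -[_ *: x]addr0; apply: Slin. Qed.

Lemma subspaceD x y : S x -> S y -> S (x + y).
Proof. by case: S_sub => _ Slin Sx Sy; rewrite -[x]scale1r; apply: Slin. Qed.

Lemma subspaceB x y : S x -> S y -> S (x - y).
Proof. by case: S_sub => _ Slin Sx Sy; rewrite addrC -scaleN1r; apply: Slin. Qed.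

Lemma subspace_sum n (F : 'I_n -> H) : (forall i, S (F i)) -> S (\sum_(i < n) F i).
Proof. by move=> SF; apply: (big_ind S) => //; [exact: S_sub.1 | exact: subspaceD]. Qed.

End Subspace.

Lemma closed_subspace_subspace M : closed_subspace ip M -> subspace M.
Proof. by case. Qed.

Lemma closed_subspaceI M N : closed_subspace ip M -> closed_subspace ip N ->
  closed_subspace ip (M `&` N).
Proof.
move=> [M0 Mlin Mcl] [N0 Nlin Ncl]; split => //.
- by move=> a x y [Mx Nx] [My Ny]; split; [exact: Mlin | exact: Nlin].
- by move=> u l uMN ul; split; [apply: Mcl ul | apply: Ncl ul] => n; case: (uMN n).
Qed.

Definition orthogonal (Z : set H) : set H := [set x | forall z, Z z -> ip x z = 0].

Lemma closed_subspace_orthogonal Z : closed_subspace ip (orthogonal Z).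
Proof.
split.
- by move=> z _; rewrite ip0l.
- by move=> a x y xZ yZ z Zz; rewrite ip_linear xZ // yZ // mulr0 addr0.
- by move=> u l uZ ul z Zz; apply: ip_lim_eq0 ul _ => n; exact: uZ.
Qed.

Lemma closed_subspace_kernel T : bounded_linear ip T -> closed_subspace ip (kernel T).
Proof.
move=> Tbl; have T_lin : is_linear T by case: Tbl.
split.
- exact: lin0.
- by move=> a x y Tx Ty; rewrite /kernel /= T_lin Tx Ty scaler0 addr0.
- move=> u l uT ul; apply: hconverges_unique (hconverges_bounded_linear Tbl ul) _.
  rewrite (_ : (fun n => T (u n)) = fun=> 0); first exact: hconverges_cst.
  by apply/funext => n; exact: uT.
Qed.

(* Membership in the span of [s], phrased recursively to allow induction on [s];
   see [in_span_sum] for the link with [finite_dim]. *)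
Fixpoint in_span (s : seq H) (x : H) : Prop :=
  if s is v :: s' then exists a, in_span s' (x - a *: v) else x = 0.

Lemma in_span0 s : in_span s 0.
Proof. by elim: s => //= v s IH; exists 0; rewrite scale0r subr0. Qed.

Lemma in_span_lin s a x y : in_span s x -> in_span s y -> in_span s (a *: x + y).
Proof.
elim: s x y => [|v s IH] x y /=; first by move=> -> ->; rewrite scaler0 addr0.
move=> [b xb] [c yc]; exists (a * b + c).
have -> : a *: x + y - (a * b + c) *: v = a *: (x - b *: v) + (y - c *: v).
  by rewrite scalerDl -scalerA scalerBr opprD !addrA; congr (_ - _); rewrite addrAC.
exact: IH.
Qed.

Lemma subspace_span s : subspace (in_span s).
Proof. by split; [exact: in_span0 | move=> a x y; exact: in_span_lin]. Qed.

Lemma span_subset S s x : subspace S -> (forall v, v \in s -> S v) -> in_span s x -> S x.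
Proof.
elim: s x => [|v s IH] x S_sub /=; first by move=> _ ->; exact: S_sub.1.
move=> sS [a xa]; rewrite -(subrK (a *: v) x) addrC.
apply: S_sub.2; first by apply: sS; rewrite inE eqxx.
by apply: IH => // w ws; apply: sS; rewrite inE ws orbT.
Qed.

Lemma in_span_sum s (c : 'I_(size s) -> R[i]) : in_span s (\sum_(i < size s) c i *: s`_i).
Proof.
elim: s c => [|v s IH] c /=; first by rewrite big_ord0.
exists (c ord0); rewrite big_ord_recl /= addrC addKr.
under eq_bigr => i _ do rewrite add0n.
exact: (IH (fun i => c (lift ord0 i))).
Qed.

Lemma finite_dim_span S : finite_dim S -> exists s, forall x, S x -> in_span s x.
Proof. by move=> [s [_ Ss]]; exists s => x /Ss [c ->]; exact: in_span_sum. Qed.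

(* Induction on the list [v :: s]: if some [u] in [F] has [T u] outside
   [span s], the coordinate of [T u] on [v] is nonzero, so subtracting
   multiples of [u] moves [F] into [F' = {x in F | T x \in span s}]. *)
Lemma linear_image_span T s F : is_linear T -> subspace F ->
  (forall x, F x -> in_span s (T x)) ->
  exists t, (forall v, v \in t -> F v) /\ forall x, F x -> exists2 y, in_span t y & T x = T y.
Proof.
move=> T_lin; elim: s F => [|v s IH] F F_sub TF.
  exists [::]; split => // x Fx; exists 0 => //=.
  by rewrite (lin0 T_lin); exact: TF x Fx.
have [[u [Fu Tu]]|] := pselect (exists u, F u /\ ~ in_span s (T u)); last first.
  move=> no_u; apply: IH F_sub _ => x Fx.
  by apply: contrapT => Tx; apply: no_u; exists x.
have [a Tua] := TF u Fu.
have a0 : a != 0 by apply: contra_notN Tu => /eqP a0; rewrite a0 scale0r subr0 in Tua.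
pose F' := [set x | F x /\ in_span s (T x)].
have F'_sub : subspace F'.
  split; first by split; [exact: F_sub.1 | rewrite (lin0 T_lin); exact: in_span0].
  move=> b x y [Fx Tx] [Fy Ty]; split; first exact: F_sub.2.
  by rewrite T_lin; apply: in_span_lin.
have [t [tF' Tt]] := IH F' F'_sub (fun x hx => hx.2).
exists (u :: t); split.
  by move=> w; rewrite inE => /orP[/eqP->|/tF' []].
move=> x Fx; have [b Txb] := TF x Fx.
have F'x : F' (x - (b / a) *: u).
  split; first by apply: subspaceB => //; apply: subspaceZ.
  have -> : T (x - (b / a) *: u) = (- (b / a)) *: (T u - a *: v) + (T x - b *: v).
    rewrite (linB T_lin) (linZ T_lin) scalerBr scalerA mulNr mulfVK // !scaleNr opprK.
    by rewrite addrA (addrAC _ (b *: v)) addrK addrC.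
  exact: in_span_lin.
have [y ty Txy] := Tt _ F'x.
exists (y + (b / a) *: u); first by exists (b / a); rewrite addrK.
by rewrite (linD T_lin) (linZ T_lin) -Txy (linB T_lin) (linZ T_lin) subrK.
Qed.

Lemma span_of_linear_injective T s F : is_linear T -> subspace F ->
  (forall x, F x -> in_span s (T x)) -> (forall x, F x -> T x = 0 -> x = 0) ->
  exists t, forall x, F x -> in_span t x.
Proof.
move=> T_lin F_sub TF Tinj; have [t [tF Tt]] := linear_image_span T_lin F_sub TF.
exists t => x Fx; have [y ty Txy] := Tt x Fx.
have Fy := span_subset F_sub tF ty.
suff /eqP : x - y = 0 by rewrite subr_eq0 => /eqP ->.
by apply: Tinj; [exact: subspaceB | rewrite (linB T_lin) Txy subrr].
Qed.

Definition bounded_seq_compact (S : set H) := forall x : nat -> H,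
  (exists B, forall n, hn (x n) <= B) -> (forall n, S (x n)) ->
  exists2 f, increasing_seq f & exists2 l, S l & hconverges ip (x \o f) l.

Lemma bounded_seq_compact_dist_gt0 S v : bounded_seq_compact S -> ~ S v ->
  exists2 d, 0 < d & forall y, S y -> d <= hn (v - y).
Proof.
move=> S_cpt Sv; apply: contrapT => /forall2NP no_d.
have /choice [y yv] : forall k : nat, exists y, S y /\ hn (v - y) < k.+1%:R^-1.
  move=> k; case: (no_d k.+1%:R^-1) => [|/existsNP [y /not_implyP [Sy /negP]]].
    by rewrite invr_gt0 ltr0n.
  by rewrite -ltNge => vy; exists y.
have [|f f_incr [l Sl yl]] := S_cpt y _ (fun n => (yv n).1).
  exists (hn v + 1) => n; rewrite -[y n](subrK v) addrC.
  apply: le_trans (hnormD _ _) _; rewrite lerD2l hnormB.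
  by apply: ltW (lt_le_trans (yv n).2 _); rewrite invf_le1 ?ler1n ?ltr0n.
suff yv' : hconverges ip (y \o f) v by apply: Sv; rewrite -(hconverges_unique yl yv').
move=> e /exists_inv_succ_lt [k ke]; exists k => n kn.
rewrite /= hnormB; apply: lt_le_trans (yv (f n)).2 (le_trans _ (ltW ke)).
by apply: inv_succ_le; exact: leq_trans kn (increasing_seq_ge f_incr n).
Qed.

Lemma normc_coef_le S v d a w : subspace S -> 0 <= d ->
  (forall y, S y -> d <= hn (v - y)) -> S w -> normc a * d <= hn (a *: v + w).
Proof.
move=> S_sub d0 vS Sw; have [->|a0] := eqVneq a 0.
  by rewrite normc0 mul0r hnorm_ge0.
have -> : a *: v + w = a *: (v - (- a^-1 *: w)).
  by rewrite scaleNr opprK scalerDr scalerA mulfV // scale1r.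
by rewrite hnormZ; apply: ler_wpM2l; [exact: normc_ge0 | apply: vS; exact: subspaceZ].
Qed.

(* A bounded sequence in [span (v :: t)] has bounded coefficients along [v] when
   [v] stays at positive distance from [span t]; extract a convergent
   subsequence of these coefficients, then of the remainders in [span t]. *)
Lemma bounded_seq_compact_span_cons v t :
  bounded_seq_compact (in_span t) -> bounded_seq_compact (in_span (v :: t)).
Proof.
move=> t_cpt x [B xB] /choice [a xa].
have [vt|vt] := pselect (in_span t v).
  have xt n : in_span t (x n).
    by rewrite -(subrK (a n *: v) (x n)) addrC; exact: in_span_lin vt (xa n).
  have [f f_incr [l tl xl]] := t_cpt x (ex_intro _ B xB) xt.
  by exists f => //; exists l => //; exists 0; rewrite scale0r subr0.
have [d d0 vd] := bounded_seq_compact_dist_gt0 t_cpt vt.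
have aB n : normc (a n) <= B / d.
  rewrite ler_pdivlMr //; apply: le_trans (xB n).
  rewrite -(subrK (a n *: v) (x n)) addrC.
  exact: normc_coef_le (subspace_span t) (ltW d0) vd (xa n).
have [g g_incr [L aL]] := complex_bolzano_weierstrass aB.
pose w n := x (g n) - a (g n) *: v.
have [|h h_incr [l tl wl]] := t_cpt w _ (fun n => xa (g n)).
  exists (B + B / d * hn v) => n; apply: le_trans (hnormD _ _) _.
  rewrite hnormN hnormZ lerD ?ler_wpM2r ?hnorm_ge0 //.
exists (g \o h); first exact: increasing_seq_comp.
exists (L *: v + l); first by exists L; rewrite addrAC subrr add0r.
have := hconvergesD (hconvergesZl v (cconverges_subseq h_incr aL)) wl.
by congr hconverges; apply/funext => n /=; rewrite /w addrC subrK.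
Qed.

Lemma bounded_seq_compact_span t : bounded_seq_compact (in_span t).
Proof.
elim: t => [|v t IH]; last exact: bounded_seq_compact_span_cons.
move=> x _ x0; exists id => //; exists 0 => // e e0.
by exists 0%N => n _; rewrite /= x0 subrr hnorm0.
Qed.

Lemma unit_min_attained T F t : bounded_linear ip T -> closed_subspace ip F ->
  (forall x, F x -> in_span t x) -> (exists x, F x /\ hn x = 1) ->
  exists w, [/\ F w, hn w = 1 & forall x, F x -> hn x = 1 -> hn (T w) <= hn (T x)].
Proof.
move=> Tbl F_cl Ft [y0 [Fy0 y01]].
pose V := [set hn (T x) | x in [set x | F x /\ hn x = 1]].
have V_inf : has_inf V.
  by split; [exists (hn (T y0)), y0 | exists 0 => _ [x _ <-]; exact: hnorm_ge0].
have /choice [x xV] : forall n : nat, exists x, (F x /\ hn x = 1) /\ hn (T x) < inf V + n.+1%:R^-1.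
  move=> n; have [|_ [x Fx <-] xV] := @inf_adherent _ V n.+1%:R^-1 _ V_inf.
    by rewrite invr_gt0 ltr0n.
  by exists x.
have [|f f_incr [l _ xl]] := bounded_seq_compact_span (x := x) _ (fun n => Ft _ (xV n).1.1).
  by exists 1 => n; rewrite (xV n).1.2.
exists l; split.
- by case: F_cl => _ _; apply; last exact: xl; move=> n; exact: (xV (f n)).1.1.
- apply/le_anti/andP; split; [apply: hnorm_lim_le xl _ | apply: hnorm_lim_ge xl _] => n;
    by rewrite /= (xV _).1.2 // lerDl invr_ge0 ler0n.
move=> z Fz z1; apply: le_trans (ge_inf V_inf.2 _); last by exists z.
apply: hnorm_lim_le (hconverges_bounded_linear Tbl xl) _ => n.
apply: le_trans (ltW (xV (f n)).2) _; rewrite lerD2l.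
exact/inv_succ_le/increasing_seq_ge.
Qed.

Lemma sqnorm_sub_le_midpoint N x d y1 y2 : subspace N -> 0 <= d ->
  (forall n, N n -> d <= hn (x - n)) -> N y1 -> N y2 ->
  sqnorm (y1 - y2) <= 2 * sqnorm (x - y1) + 2 * sqnorm (x - y2) - 4 * d ^+ 2.
Proof.
move=> N_sub d0 xN Ny1 Ny2.
have two_neq0 : (2 : R[i]) != 0 by rewrite pnatr_eq0.
pose m := (2^-1 : R[i]) *: (y1 + y2).
have dm : d ^+ 2 <= sqnorm (x - m).
  rewrite -sqr_hnorm ler_pXn2r ?nnegrE ?hnorm_ge0 //.
  by apply: xN; apply: subspaceZ => //; exact: subspaceD.
have xm : (x - y2) + (x - y1) = (2 : R[i]) *: (x - m).
  rewrite scalerBr /m scalerA mulfV // scale1r scaler_nat mulr2n opprD addrACA.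
  by congr (_ + _); exact: addrC.
have := parallelogram (x - y2) (x - y1).
rewrite xm sqnormZ normcMn normc1.
have -> : x - y2 - (x - y1) = y1 - y2 by rewrite opprB addrC addrA subrK.
lra.
Qed.

Lemma minimizing_seq_cauchy N x d (s : nat -> H) : subspace N -> 0 <= d ->
  (forall n, N n -> d <= hn (x - n)) ->
  (forall k, N (s k) /\ hn (x - s k) < d + k.+1%:R^-1) -> hcauchy ip s.
Proof.
move=> N_sub d0 xN sd e e0.
have c0 : 0 < e ^+ 2 / (4 * (2 * d + 1)) by apply: divr_gt0; [exact: exprn_gt0 | lra].
have [k] := exists_inv_succ_lt c0.
have r0 : 0 < k.+1%:R^-1 :> R by rewrite invr_gt0 ltr0n.
have r1 : k.+1%:R^-1 <= 1 :> R by rewrite invf_le1 ?ler1n ?ltr0n.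
move: r0 r1; set r := k.+1%:R^-1 => r0 r1; rewrite ltr_pdivlMr; last lra.
move=> kr; exists k => m n km kn.
have sr j : (k <= j)%N -> sqnorm (x - s j) <= (d + r) ^+ 2.
  move=> kj; rewrite -sqr_hnorm ler_pXn2r ?nnegrE ?hnorm_ge0 ?addr_ge0 ?(ltW r0) //.
  by apply/ltW/(lt_le_trans (sd j).2); rewrite lerD2l; exact: inv_succ_le.
have := sqnorm_sub_le_midpoint N_sub d0 xN (sd m).1 (sd n).1.
have := sr m km; have := sr n kn.
have rr : r * r <= r by rewrite -{3}[r]mulr1 ler_wpM2l // ltW.
rewrite -(@ltr_pXn2r _ 2) ?nnegrE ?hnorm_ge0 ?(ltW e0) // sqr_hnorm.
nra.
Qed.

Lemma nearest_point_orthogonal N x z : subspace N -> N z ->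
  (forall n, N n -> hn (x - z) <= hn (x - n)) -> orthogonal N (x - z).
Proof.
move=> N_sub Nz z_min n Nn.
pose t := (sqnorm n + 1)^-1.
have n0 := sqnorm_ge0 n.
have t0 : 0 < t by rewrite invr_gt0; lra.
have tn : t * (sqnorm n + 1) = 1 by rewrite mulVf //; lra.
(* compare with the competitor [z + t <x - z, n> n] *)
have := z_min _ (subspaceD N_sub Nz (subspaceZ N_sub (t%:C * ip (x - z) n) Nn)).
rewrite opprD addrA ler_hnorm sqnorm_subZ sqr_normc.
move: tn; case: (ip (x - z) n) => p q /= tn h.
have tsn : t * sqnorm n = 1 - t by lra.
have pq0 : p ^+ 2 + q ^+ 2 <= 0.
  rewrite leNgt; apply/negP => pq.
  have : 0 < t * (p ^+ 2 + q ^+ 2) * (1 + t) by rewrite !mulr_gt0 //; lra.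
  nra.
have p0 : p = 0 by nra.
have q0 : q = 0 by nra.
by rewrite p0 q0.
Qed.

Section Complete.
Hypothesis H_complete : hcomplete ip.

Lemma orthogonal_decomposition N x : closed_subspace ip N -> exists2 z, N z & orthogonal N (x - z).
Proof.
move=> N_cl; have N_sub := closed_subspace_subspace N_cl.
pose D := [set hn (x - n) | n in N].
have D_inf : has_inf D.
  split; first by exists (hn (x - 0)), 0; first exact: N_sub.1.
  by exists 0 => _ [n _ <-]; exact: hnorm_ge0.
have d0 : 0 <= inf D by apply: lb_le_inf D_inf.1 _ => _ [n _ <-]; exact: hnorm_ge0.
have xN n : N n -> inf D <= hn (x - n) by move=> Nn; apply: (ge_inf D_inf.2); exists n.
have /choice [s sD] : forall k : nat, exists s, N s /\ hn (x - s) < inf D + k.+1%:R^-1.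
  move=> k; have [|_ [s Ns <-] sD] := @inf_adherent _ D k.+1%:R^-1 _ D_inf.
    by rewrite invr_gt0 ltr0n.
  by exists s.
have [z sz] := H_complete (minimizing_seq_cauchy N_sub d0 xN sD).
have Nz : N z by case: N_cl => _ _; apply; last exact: sz; move=> k; exact: (sD k).1.
exists z => //; apply: nearest_point_orthogonal => // n Nn; apply: le_trans (xN _ Nn).
apply: hnorm_lim_le (hconvergesB (hconverges_cst x) sz) _ => k.
exact: ltW (sD k).2.
Qed.

End Complete.

Definition orthonormal (l : seq H) := forall i j, (i < size l)%N -> (j < size l)%N ->
  ip l`_i l`_j = (i == j)%:R.

Lemma orthonormal_rcons l u : orthonormal l -> ip u u = 1 ->
  (forall j, (j < size l)%N -> ip u l`_j = 0) -> orthonormal (rcons l u).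
Proof.
move=> lON uu ul i j; rewrite size_rcons !ltnS !nth_rcons.
rewrite leq_eqVlt => /orP[/eqP->|li]; rewrite leq_eqVlt => /orP[/eqP->|lj].
- by rewrite ltnn !eqxx.
- by rewrite ltnn eqxx lj ul // gtn_eqF.
- by rewrite ltnn eqxx li ip_conj ul // ltn_eqF // conjc0.
- by rewrite li lj lON.
Qed.

Lemma orthonormal_extend S l : subspace S -> ~ finite_dim S ->
  (forall v, v \in l -> S v) -> orthonormal l ->
  exists u, [/\ S u, ip u u = 1 & forall j, (j < size l)%N -> ip u l`_j = 0].
Proof.
move=> S_sub S_inf lS lON.
have [v [Sv vl]] : exists v, S v /\
    ~ exists c : 'I_(size l) -> R[i], v = \sum_(i < size l) c i *: l`_i.
  by apply: contrapT => /forallNP no_v; apply: S_inf; exists l; split => // x Sx;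
    move: (no_v x) => /not_andP [|/contrapT].
pose w := v - \sum_(i < size l) ip v l`_i *: l`_i.
have Sw : S w.
  apply: subspaceB => //; apply: subspace_sum => // i.
  by apply: subspaceZ => //; apply: lS; exact: mem_nth.
have wl j : (j < size l)%N -> ip w l`_j = 0.
  move=> lj; rewrite ipBl ip_suml (bigD1 (Ordinal lj)) //= ipZl lON // eqxx mulr1.
  rewrite big1 ?addr0 ?subrr // => i; rewrite -val_eqE /= => /negPf ij.
  by rewrite ipZl lON // ij mulr0.
have w0 : w != 0.
  by apply: contra_notN vl => /eqP/subr0_eq vE; exists (fun i => ip v l`_i).
exists ((hn w)^-1%:C *: w); split.
- exact: subspaceZ.
- by rewrite ip_sqnorm -sqr_hnorm hnorm_normalize // expr1n.
- by move=> j lj; rewrite ipZl wl // mulr0.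
Qed.

Lemma orthonormal_seq_of_infinite_dim S : subspace S -> ~ finite_dim S ->
  exists2 e : nat -> H, (forall n, S (e n)) & forall n m, ip (e n) (e m) = (n == m)%:R.
Proof.
move=> S_sub S_inf.
have /choice [g gP] : forall l : seq H, exists u, (forall v, v \in l -> S v) /\ orthonormal l ->
    [/\ S u, ip u u = 1 & forall j, (j < size l)%N -> ip u l`_j = 0].
  move=> l; have [[lS lON]|no_l] := pselect ((forall v, v \in l -> S v) /\ orthonormal l).
    by have [u ?] := orthonormal_extend S_sub S_inf lS lON; exists u.
  by exists 0.
pose L n := iter n (fun l => rcons l (g l)) [::].
have size_L n : size (L n) = n by elim: n => //= n IH; rewrite size_rcons IH.
have nth_L m k : (k < m)%N -> (L m)`_k = g (L k).
  elim: m => // m IH; rewrite ltnS leq_eqVlt => /orP[/eqP->|km].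
    by rewrite /= nth_rcons size_L ltnn eqxx.
  by rewrite /= nth_rcons size_L km IH.
have L_ok n : (forall v, v \in L n -> S v) /\ orthonormal (L n).
  elim: n => [|n [LS LON]]; first by split => // i j.
  have [Sg gg gL] := gP _ (conj LS LON).
  split; last exact: orthonormal_rcons.
  by move=> v; rewrite /= mem_rcons inE => /orP[/eqP->|/LS].
have g_orth n k : (k < n)%N -> ip (g (L n)) (g (L k)) = 0.
  by move=> kn; have [_ _ gL] := gP _ (L_ok n); rewrite -(nth_L n k kn) gL // size_L.
exists (fun n => g (L n)) => [n|n m]; first by case: (gP _ (L_ok n)).
case: (ltngtP n m) => [nm|mn|->].
- by rewrite ip_conj g_orth // conjc0.
- by rewrite g_orth.
- by case: (gP _ (L_ok m)).
Qed.

Lemma unit_of_nonzero M : closed_subspace ip M -> M <> [set 0] -> exists x, M x /\ hn x = 1.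
Proof.
move=> M_cl M_neq0; have [[x [Mx x0]]|M0] := pselect (exists x, M x /\ x != 0).
  exists ((hn x)^-1%:C *: x); split; last exact: hnorm_normalize.
  by apply: subspaceZ Mx; exact: closed_subspace_subspace.
exfalso; apply: M_neq0; apply/seteqP; split => [x Mx|_ ->]; last by case: M_cl.
by apply: contrapT => /eqP x0; apply: M0; exists x.
Qed.

Lemma Nstar_of_min T M : (exists w, [/\ M w, hn w = 1 &
    forall x, M x -> hn x = 1 -> hn (T w) <= hn (T x)]) -> satisfies_Nstar ip T M.
Proof.
move=> [w [Mw w1 w_min]]; exists w; split => //.
have V_lb : has_lbound [set hn (T x) | x in [set x | M x /\ hn x = 1]].
  by exists 0 => _ [x _ <-]; exact: hnorm_ge0.
apply/le_anti/andP; split; last by apply: (ge_inf V_lb); exists w.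
by apply: lb_le_inf; [exists (hn (T w)), w | move=> _ [x [Mx x1] <-]; exact: w_min].
Qed.

Section OrthogonalProjection.
Variable Q : H -> H.
Hypothesis Q_proj : orth_projection ip Q.

Lemma proj_bounded : bounded_linear ip Q. Proof. by case: Q_proj. Qed.
Lemma proj_linear : is_linear Q. Proof. by case: Q_proj => -[]. Qed.
Lemma projK x : Q (Q x) = Q x. Proof. by case: Q_proj. Qed.
Lemma proj_selfadjoint x y : ip (Q x) y = ip x (Q y). Proof. by case: Q_proj. Qed.

Lemma coproj_linear : is_linear (fun x => x - Q x).
Proof.
move=> a x y /=; rewrite proj_linear scalerBr opprD !addrA.
by congr (_ + _); rewrite addrAC.
Qed.

Lemma proj_coproj x : Q (x - Q x) = 0.
Proof. by rewrite (linB proj_linear) projK subrr. Qed.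

Lemma coproj_selfadjoint x y : ip (x - Q x) y = ip x (y - Q y).
Proof. by rewrite ipBl ipBr proj_selfadjoint. Qed.

Lemma sqnorm_proj x : sqnorm x = sqnorm (Q x) + sqnorm (x - Q x).
Proof.
have Qx_orth : ip (Q x) (x - Q x) = 0 by rewrite proj_selfadjoint proj_coproj ip0r.
have := sqnormD (Q x) (x - Q x); rewrite Qx_orth [Q x + _]addrC subrK => ->.
by rewrite /= mulr0 addr0.
Qed.

Lemma range_proj y : range Q y <-> Q y = y.
Proof. by split => [[x _ <-]|Qy]; [rewrite projK | exists y]. Qed.

Lemma subspace_kernel_proj : subspace (kernel Q).
Proof. by case: (closed_subspace_kernel proj_bounded). Qed.

Lemma subspace_range_proj : subspace (range Q).
Proof.
split; first by apply/range_proj; exact: (lin0 proj_linear).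
by move=> a x y /range_proj Qx /range_proj Qy; apply/range_proj; rewrite proj_linear Qx Qy.
Qed.

Section Counterexample.
Variables e f : nat -> H.
Hypothesis e_ker : forall n, Q (e n) = 0.
Hypothesis f_range : forall n, Q (f n) = f n.
Hypothesis e_orthonormal : forall n m, ip (e n) (e m) = (n == m)%:R.
Hypothesis f_orthonormal : forall n m, ip (f n) (f m) = (n == m)%:R.

Let c (n : nat) : R := n.+1%:R^-1.
Let u n := e n + (c n)%:C *: f n.

Let M := orthogonal [set z | (exists2 w, orthogonal (range e) w & z = w - Q w) \/
                             exists n, z = f n - (c n)%:C *: e n].

Lemma c_gt0 n : 0 < c n. Proof. by rewrite invr_gt0 ltr0n. Qed.

Lemma hnorm_e n : hn (e n) = 1.
Proof. by rewrite hnorm_ip1 // e_orthonormal eqxx. Qed.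

Lemma hnorm_f n : hn (f n) = 1.
Proof. by rewrite hnorm_ip1 // f_orthonormal eqxx. Qed.

Lemma ip_f_e n m : ip (f n) (e m) = 0.
Proof. by rewrite -f_range proj_selfadjoint e_ker ip0r. Qed.

Lemma proj_u n : Q (u n) = (c n)%:C *: f n.
Proof. by rewrite (linD proj_linear) (linZ proj_linear) e_ker f_range add0r. Qed.

Lemma M_u n : M (u n).
Proof.
move=> _ [[w we ->]|[m ->]].
  rewrite -coproj_selfadjoint proj_u addrK ip_conj.
  by rewrite (we (e n)) ?conjc0 //; exists n.
rewrite ipBr ipZr !ipDl !ipZl e_orthonormal f_orthonormal !ip_f_e ip_conj ip_f_e conjc0.
by rewrite conjc_real mulr0 addr0 add0r; case: eqVneq => [->|]; rewrite ?subrr // !mulr0 subrr.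
Qed.

Lemma u_neq0 n : u n != 0.
Proof.
apply/eqP => /(congr1 (ip^~ (e n))); rewrite ipDl ipZl ip_f_e mulr0 addr0 ip0l e_orthonormal eqxx.
by move/eqP; rewrite oner_eq0.
Qed.

Lemma hnorm_proj_normalized_u n : hn (Q ((hn (u n))^-1%:C *: u n)) <= c n.
Proof.
have u1 : 1 <= hn (u n).
  have -> : 1 = hn (u n - Q (u n)) by rewrite proj_u addrK hnorm_e.
  by rewrite ler_hnorm [X in _ <= X]sqnorm_proj lerDr sqnorm_ge0.
rewrite (linZ proj_linear) hnormZ proj_u hnormZ !normc_real hnorm_f mulr1.
rewrite !ger0_norm ?invr_ge0 ?hnorm_ge0 ?(ltW (c_gt0 n)) //.
by apply: ler_piMl; [exact: ltW (c_gt0 n) | rewrite invf_le1 // (lt_le_trans ltr01 u1)].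
Qed.

Lemma M_proj_eq0 x : M x -> Q x = 0 -> x = 0.
Proof.
move=> Mx Qx0.
have xe n : ip x (e n) = 0.
  have := Mx (f n - (c n)%:C *: e n) (or_intror (ex_intro _ n erefl)).
  rewrite ipBr ipZr conjc_real -f_range -proj_selfadjoint Qx0 ip0l sub0r => /eqP.
  by rewrite oppr_eq0 mulf_eq0 fmorph_eq0 gt_eqF ?c_gt0 //= => /eqP.
have x_orth : orthogonal (range e) x by move=> _ [n _ <-]; exact: xe.
apply: ip_eq0; have := Mx (x - Q x) (or_introl (ex_intro2 _ _ x x_orth erefl)).
by rewrite Qx0 subr0.
Qed.

Lemma not_ANstar_of_orthonormal : ~ satisfies_ANstar ip Q.
Proof.
have M_cl : closed_subspace ip M by exact: closed_subspace_orthogonal.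
have M_neq0 : M <> [set 0] by move=> M0; have := M_u 0; rewrite M0 => /eqP; apply/negP/u_neq0.
move=> /(_ M M_cl M_neq0) [x0 [Mx0 x01 Qx0]].
have Qx0_le n : hn (Q x0) <= c n.
  rewrite Qx0; apply: le_trans (hnorm_proj_normalized_u n).
  apply: ge_inf; first by exists 0 => _ [x _ <-]; exact: hnorm_ge0.
  exists ((hn (u n))^-1%:C *: u n) => //; split; last exact/hnorm_normalize/u_neq0.
  exact/(subspaceZ (closed_subspace_subspace M_cl))/M_u.
have /hnorm_eq0 /(M_proj_eq0 Mx0) x00 : hn (Q x0) = 0.
  apply/le_anti; rewrite hnorm_ge0 andbT; apply/ler_addgt0Pr => r /exists_inv_succ_lt [k kr].
  by rewrite add0r; apply/ltW/(le_lt_trans (Qx0_le k) kr).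
by move: x01; rewrite x00 hnorm0 => /eqP; rewrite eq_sym oner_eq0.
Qed.

End Counterexample.

Lemma finite_dim_of_ANstar : satisfies_ANstar ip Q -> finite_dim (kernel Q) \/ finite_dim (range Q).
Proof.
move=> Q_AN; apply: contrapT => /not_orP [ker_inf range_inf].
have [e eK eON] := orthonormal_seq_of_infinite_dim subspace_kernel_proj ker_inf.
have [f fR fON] := orthonormal_seq_of_infinite_dim subspace_range_proj range_inf.
exact: not_ANstar_of_orthonormal eK (fun n => proj1 (range_proj _) (fR n)) eON fON Q_AN.
Qed.

Lemma coproj_bounded : bounded_linear ip (fun x => x - Q x).
Proof.
split; first exact: coproj_linear.
by exists 1 => x; rewrite mul1r ler_hnorm [X in _ <= X]sqnorm_proj lerDr sqnorm_ge0.
Qed.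

Lemma ANstar_of_finite_dim_range : finite_dim (range Q) -> satisfies_ANstar ip Q.
Proof.
move=> /finite_dim_span [s sQ] M M_cl M_neq0; apply: Nstar_of_min.
have M_sub := closed_subspace_subspace M_cl.
have [[x [Mx x0 Qx]]|Q_inj] := pselect (exists x, [/\ M x, x != 0 & Q x = 0]).
  exists ((hn x)^-1%:C *: x); split; [exact: subspaceZ | exact: hnorm_normalize |].
  by move=> y _ _; rewrite (linZ proj_linear) Qx scaler0 hnorm0 hnorm_ge0.
have [t Mt] : exists t, forall x, M x -> in_span t x.
  apply: span_of_linear_injective proj_linear M_sub (fun x _ => sQ _ (imageT _ _)) _ => x Mx Qx.
  by apply: contrapT => /eqP x0; apply: Q_inj; exists x.
exact: unit_min_attained proj_bounded M_cl Mt (unit_of_nonzero M_cl M_neq0).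
Qed.

Lemma proj_min_extends F w z y : subspace F -> hn w = 1 ->
  (forall v, F v -> hn v = 1 -> hn (Q w) <= hn (Q v)) ->
  Q z = z -> F y -> ip y z = 0 -> hn (z + y) = 1 -> hn (Q w) <= hn (Q (z + y)).
Proof.
move=> F_sub w1 w_min Qz Fy yz zy1.
have sq1 v : hn v = 1 -> sqnorm v = 1 by move=> v1; rewrite -sqr_hnorm v1 expr1n.
have y_le1 : sqnorm y <= 1.
  by rewrite -(sq1 _ zy1) sqnormD ip_conj yz conjc0 /= mulr0 addr0 lerDr sqnorm_ge0.
have Pzy : z + y - Q (z + y) = y - Q y.
  by rewrite (linD proj_linear) Qz opprD addrACA subrr add0r.
have := sqnorm_proj (z + y); rewrite Pzy (sq1 _ zy1) => Ezy.
have := sqnorm_proj w; rewrite (sq1 _ w1) => Ew.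
rewrite ler_hnorm; have [y0|y0] := eqVneq y 0.
  move: Ezy; rewrite y0 (lin0 proj_linear) subr0 sqnorm0 !addr0 => <-.
  by have := sqnorm_ge0 (w - Q w); lra.
pose v := (hn y)^-1%:C *: y.
have v1 : hn v = 1 by exact: hnorm_normalize.
have := w_min v (subspaceZ F_sub _ Fy) v1; rewrite ler_hnorm => wv.
have := sqnorm_proj v; rewrite (sq1 _ v1) => Ev.
have Pyv : sqnorm (y - Q y) = sqnorm y * sqnorm (v - Q v).
  have -> : y - Q y = (hn y)%:C *: (v - Q v).
    by rewrite -(linZ coproj_linear) scalerA -rmorphM mulfV ?scale1r // gt_eqF // hnorm_gt0.
  by rewrite sqnormZ normc_real real_normK ?num_real // sqr_hnorm.
have := sqnorm_ge0 (v - Q v); have := sqnorm_ge0 y; nra.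
Qed.

Lemma ANstar_of_finite_dim_kernel : hcomplete ip -> finite_dim (kernel Q) -> satisfies_ANstar ip Q.
Proof.
move=> H_complete /finite_dim_span [s sK] M M_cl M_neq0; apply: Nstar_of_min.
pose N := M `&` kernel (fun x => x - Q x).
pose M1 := M `&` orthogonal N.
have N_cl : closed_subspace ip N := closed_subspaceI M_cl (closed_subspace_kernel coproj_bounded).
have M1_cl : closed_subspace ip M1 := closed_subspaceI M_cl (closed_subspace_orthogonal N).
have [t M1t] : exists t, forall x, M1 x -> in_span t x.
  apply: span_of_linear_injective coproj_linear (closed_subspace_subspace M1_cl) _ _.
    by move=> x _; apply: sK; exact: proj_coproj.
  by move=> x [Mx xN] Px0; apply: ip_eq0; apply: xN.
have M_split x : M x -> exists2 z, N z & x = z + (x - z) /\ M1 (x - z).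
  move=> Mx; have [z Nz xz] := orthogonal_decomposition H_complete x N_cl.
  exists z => //; split; first by rewrite addrC subrK.
  by split => //; apply: (subspaceB (closed_subspace_subspace M_cl)) => //; case: Nz.
have proj_N z : N z -> Q z = z by move=> [_ /eqP]; rewrite subr_eq0 => /eqP.
have [[y [M1y y1]]|M1_0] := pselect (exists y, M1 y /\ hn y = 1).
  have [w [M1w w1 w_min]] := unit_min_attained proj_bounded M1_cl M1t (ex_intro _ y (conj M1y y1)).
  exists w; split => //; first exact: M1w.1.
  move=> x Mx x1; have [z Nz [xE M1xz]] := M_split x Mx; rewrite xE in x1 *.
  apply: proj_min_extends (closed_subspace_subspace M1_cl) w1 w_min (proj_N z Nz) _ _ x1 => //.
  exact: M1xz.2.
have [x0 [Mx0 x01]] := unit_of_nonzero M_cl M_neq0.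
have Q_unit x : M x -> hn x = 1 -> hn (Q x) = 1.
  move=> Mx x1; have [z Nz [xE M1xz]] := M_split x Mx.
  have xz0 : x - z = 0.
    apply: contrapT => /eqP xz0; apply: M1_0; exists ((hn (x - z))^-1%:C *: (x - z)).
    by split; [exact: (subspaceZ (closed_subspace_subspace M1_cl)) | exact: hnorm_normalize].
  move/eqP: xz0; rewrite subr_eq0 => /eqP xz.
  by rewrite xz proj_N // -xz.
by exists x0; split => // x Mx x1; rewrite !Q_unit.
Qed.

End OrthogonalProjection.
End InnerProductSpace.

Theorem theorem3p10 (R : realType) (H : lmodType R[i]) (ip : H -> H -> R[i])
  (Q : H -> H) :
  is_hilbert ip -> orth_projection ip Q ->
  (satisfies_ANstar ip Q <->
   finite_dim (kernel Q) \/ finite_dim (range Q)).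
Proof.
move=> [[ip_linear ip_conj ip_ge0 ip_eq0] H_complete] Q_proj; split.
  by apply: finite_dim_of_ANstar.
case=> [ker_fin|range_fin].
  by apply: ANstar_of_finite_dim_kernel.
by apply: ANstar_of_finite_dim_range.
Qed.
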